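(* If $M\to_{\beta\mu}N$ and $\Gamma\vdash M:\delta\mid\Delta$ is derivable in the intersection type assignment system, then $\Gamma\vdash N:\delta\mid\Delta$ is derivable.
   Context: $\lambda\mu$ terms and commands: $M::=x\mid\lambda x.M\mid MN\mid\mu\alpha.\mathsf C$ and $\mathsf C::=[\alpha]M$. Structural substitution $T[\alpha\Leftarrow L]$ replaces, recursively, every subterm $[\alpha]N$ by $[\alpha](N[\alpha\Leftarrow L])L$. $\to_{\beta\mu}$ is the compatible closure of: - $(\lambda x.M)N\to M[N/x]$; - $(\mu\alpha.\mathsf C)N\to\mu\alpha.\mathsf C[\alpha\Leftarrow N]$; - $[\alpha]\mu\beta.\mathsf C\to\mathsf C[\alpha/\beta]$. Types (for a fixed $\omega$-algebraic lattice $R$): - $\Lambda_R$: $\rho::=\psi_a\mid\omega\mid\rho\wedge\rho$; - $\Lambda_D$: $\delta::=\rho\mid\kappa\to\rho\mid\omega\mid\delta\wedge\delta$; - $\Lambda_C$: $\kappa::=\delta\times\kappa\mid\omega\mid\kappa\wedge\kappa$. The relations $\le_R,\le_D,\le_C$ are the least reflexive, transitive relations with $\sigma\wedge\tau\le\sigma,\tau$, $\sigma\le\omega$, $\rho\le\sigma,\tau\Rightarrow\rho\le\sigma\wedge\tau$, and additionally: - $\psi_\bot\sim\omega$ and $\psi_{a\sqcup b}\sim\psi_a\wedge\psi_b$; - $\le_R\subseteq\le_D$; - $\omega\le_D\omega\to\omega$; - $\psi_a\le_D\omega\to\psi_a\le_D\psi_a$; - $\omega\le_C\omega\times\omega$;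 - $(\kappa\to\rho_1)\wedge(\kappa\to\rho_2)\le_D\kappa\to(\rho_1\wedge\rho_2)$; - $(\delta_1\times\kappa_1)\wedge(\delta_2\times\kappa_2)\le_C(\delta_1\wedge\delta_2)\times(\kappa_1\wedge\kappa_2)$; - $\to$ is contravariant in $\Lambda_C$ and covariant in $\Lambda_R$; - $\times$ is covariant in both arguments. Type assignment. Bases $\Gamma$ are finite maps from variables to $\Lambda_D$, and contexts $\Delta$ are finite maps from names to $\Lambda_C$. $\Gamma(x)$ and $\Delta(\alpha)$ are $\omega$ outside the domain. The rules are: - (Ax) $\Gamma,x{:}\delta\vdash x:\delta\mid\Delta$. - (Abs) From $\Gamma\vdash M:\kappa\to\rho\mid\Delta$, $\Gamma(x)=\delta$, infer $\Gamma\setminus x\vdash\lambda x.M:(\delta\times\kappa)\to\rho\mid\Delta$. - (App) From $\Gamma\vdash M:(\delta\times\kappa)\to\rho\mid\Delta$ and $\Gamma\vdash N:\delta\mid\Delta$, infer $\Gamma\vdash MN:\kappa\to\rho\mid\Delta$. - (Cmd) From $\Gamma\vdash M:\delta\mid\Delta$, $\Delta(\alpha)=\kappa$, infer $\Gamma\vdash[\alpha]M:\delta\times\kappa\mid\Delta$. - ($\mu$) From $\Gamma\vdash\mathsf C:(\kappa'\to\rho)\times\kappa'\mid\Delta$, $\Delta(\alpha)=\kappa$, infer $\Gamma\vdash\mu\alpha.\mathsf C:\kappa\to\rho\mid\Delta\setminus\alpha$. - ($\wedge$), ($\omega$) and ($\le$). *)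

(* Intersection types for the lambda-mu calculus
   (van Bakel, Barbanera, de'Liguoro).  Terms use de Bruijn indices,
   both for term variables and for mu-names. *)
From Stdlib Require Import Arith.

Record complete_lattice := CompleteLattice {
  car :> Type;
  lle : car -> car -> Prop;
  lle_refl : forall x, lle x x;
  lle_trans : forall x y z, lle x y -> lle y z -> lle x z;
  lle_antisym : forall x y, lle x y -> lle y x -> x = y;
  lsup : (car -> Prop) -> car;
  lsup_ub : forall (S : car -> Prop) x, S x -> lle x (lsup S);
  lsup_least : forall (S : car -> Prop) y,
      (forall x, S x -> lle x y) -> lle (lsup S) y
}.

Definition directed (L : complete_lattice) (D : L -> Prop) : Prop :=
  (exists d, D d) /\
  (forall x y, D x -> D y -> exists z, D z /\ lle L x z /\ lle L y z).

Definition compact (L : complete_lattice) (c : L) : Prop :=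
  forall D : L -> Prop, directed L D -> lle L c (lsup L D) ->
    exists d, D d /\ lle L c d.

Definition omega_algebraic (L : complete_lattice) : Prop :=
  (forall x : L, x = lsup L (fun c => compact L c /\ lle L c x)) /\
  (exists f : nat -> L, forall c, compact L c -> exists n, f n = c).

Definition lbot (L : complete_lattice) : L := lsup L (fun _ => False).
Definition ljoin (L : complete_lattice) (a b : L) : L :=
  lsup L (fun x => x = a \/ x = b).

Definition cpt (L : complete_lattice) := { c : L | compact L c }.

Inductive rtype (L : complete_lattice) : Type :=
| Psi : cpt L -> rtype L
| OmR : rtype L
| AndR : rtype L -> rtype L -> rtype L.

(* Lambda_D and Lambda_C.  Lambda_R is included in Lambda_D via [embR]
   below (psi_a, omega and /\ of Lambda_R are literally those of Lambda_D). *)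
Inductive dtype (L : complete_lattice) : Type :=
| DPsi : cpt L -> dtype L
| DArr : ctype L -> rtype L -> dtype L
| OmD : dtype L
| AndD : dtype L -> dtype L -> dtype L
with ctype (L : complete_lattice) : Type :=
| Prod : dtype L -> ctype L -> ctype L
| OmC : ctype L
| AndC : ctype L -> ctype L -> ctype L.

Arguments Psi {L}. Arguments OmR {L}. Arguments AndR {L}.
Arguments DPsi {L}. Arguments DArr {L}. Arguments OmD {L}. Arguments AndD {L}.
Arguments Prod {L}. Arguments OmC {L}. Arguments AndC {L}.

Fixpoint embR {L : complete_lattice} (r : rtype L) : dtype L :=
  match r with
  | Psi a => DPsi a
  | OmR => OmD
  | AndR r1 r2 => AndD (embR r1) (embR r2)
  end.

Inductive leR (L : complete_lattice) : rtype L -> rtype L -> Prop :=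
| leR_refl : forall r, leR L r r
| leR_trans : forall r s t, leR L r s -> leR L s t -> leR L r t
| leR_andl : forall r s, leR L (AndR r s) r
| leR_andr : forall r s, leR L (AndR r s) s
| leR_om : forall r, leR L r OmR
| leR_glb : forall r s t, leR L r s -> leR L r t -> leR L r (AndR s t)
| leR_bot1 : forall a : cpt L, proj1_sig a = lbot L -> leR L (Psi a) OmR
| leR_bot2 : forall a : cpt L, proj1_sig a = lbot L -> leR L OmR (Psi a)
| leR_join1 : forall a b c : cpt L,
    proj1_sig c = ljoin L (proj1_sig a) (proj1_sig b) ->
    leR L (Psi c) (AndR (Psi a) (Psi b))
| leR_join2 : forall a b c : cpt L,
    proj1_sig c = ljoin L (proj1_sig a) (proj1_sig b) ->
    leR L (AndR (Psi a) (Psi b)) (Psi c).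

Inductive leD (L : complete_lattice) : dtype L -> dtype L -> Prop :=
| leD_refl : forall d, leD L d d
| leD_trans : forall d e f, leD L d e -> leD L e f -> leD L d f
| leD_andl : forall d e, leD L (AndD d e) d
| leD_andr : forall d e, leD L (AndD d e) e
| leD_om : forall d, leD L d OmD
| leD_glb : forall d e f, leD L d e -> leD L d f -> leD L d (AndD e f)
| leD_R : forall r s, leR L r s -> leD L (embR r) (embR s)
| leD_omarr : leD L OmD (DArr OmC OmR)
| leD_psiarr1 : forall a, leD L (DPsi a) (DArr OmC (Psi a))
| leD_psiarr2 : forall a, leD L (DArr OmC (Psi a)) (DPsi a)
| leD_arrand : forall k r1 r2,
    leD L (AndD (DArr k r1) (DArr k r2)) (DArr k (AndR r1 r2))
| leD_arr : forall k k' r r', leC L k' k -> leR L r r' ->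
    leD L (DArr k r) (DArr k' r')
with leC (L : complete_lattice) : ctype L -> ctype L -> Prop :=
| leC_refl : forall k, leC L k k
| leC_trans : forall k l m, leC L k l -> leC L l m -> leC L k m
| leC_andl : forall k l, leC L (AndC k l) k
| leC_andr : forall k l, leC L (AndC k l) l
| leC_om : forall k, leC L k OmC
| leC_glb : forall k l m, leC L k l -> leC L k m -> leC L k (AndC l m)
| leC_omprod : leC L OmC (Prod OmD OmC)
| leC_prodand : forall d1 d2 k1 k2,
    leC L (AndC (Prod d1 k1) (Prod d2 k2)) (Prod (AndD d1 d2) (AndC k1 k2))
| leC_prod : forall d d' k k', leD L d d' -> leC L k k' ->
    leC L (Prod d k) (Prod d' k').

Inductive term : Type :=
| Var : nat -> term
| Lam : term -> term
| App : term -> term -> term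
| Mu : cmd -> term                   (* binds name 0 *)
with cmd : Type :=
| Cmd : nat -> term -> cmd.

Fixpoint lift_t (c : nat) (M : term) : term :=
  match M with
  | Var n => if n <? c then Var n else Var (S n)
  | Lam M => Lam (lift_t (S c) M)
  | App M N => App (lift_t c M) (lift_t c N)
  | Mu C => Mu (lift_c c C)
  end
with lift_c (c : nat) (C : cmd) : cmd :=
  match C with Cmd a M => Cmd a (lift_t c M) end.

Fixpoint liftn_t (c : nat) (M : term) : term :=
  match M with
  | Var n => Var n
  | Lam M => Lam (liftn_t c M)
  | App M N => App (liftn_t c M) (liftn_t c N)
  | Mu C => Mu (liftn_c (S c) C)
  end
with liftn_c (c : nat) (C : cmd) : cmd :=
  match C with Cmd a M => Cmd (if a <? c then a else S a) (liftn_t c M) end.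

(* M[N/k] : substitute N for term variable k, lowering variables > k *)
Fixpoint subst_t (k : nat) (N : term) (M : term) : term :=
  match M with
  | Var n => if n <? k then Var n else if n =? k then N else Var (pred n)
  | Lam M => Lam (subst_t (S k) (lift_t 0 N) M)
  | App M1 M2 => App (subst_t k N M1) (subst_t k N M2)
  | Mu C => Mu (subst_c k (liftn_t 0 N) C)
  end
with subst_c (k : nat) (N : term) (C : cmd) : cmd :=
  match C with Cmd a M => Cmd a (subst_t k N M) end.

Fixpoint ssubst_t (k : nat) (L : term) (M : term) : term :=
  match M with
  | Var n => Var n
  | Lam M => Lam (ssubst_t k (lift_t 0 L) M)
  | App M1 M2 => App (ssubst_t k L M1) (ssubst_t k L M2)
  | Mu C => Mu (ssubst_c (S k) (liftn_t 0 L) C)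
  end
with ssubst_c (k : nat) (L : term) (C : cmd) : cmd :=
  match C with
  | Cmd a M => if a =? k then Cmd a (App (ssubst_t k L M) L)
               else Cmd a (ssubst_t k L M)
  end.

(* renaming T[a/k] of name k by name a, lowering names > k *)
Fixpoint ren_t (k a : nat) (M : term) : term :=
  match M with
  | Var n => Var n
  | Lam M => Lam (ren_t k a M)
  | App M1 M2 => App (ren_t k a M1) (ren_t k a M2)
  | Mu C => Mu (ren_c (S k) (S a) C)
  end
with ren_c (k a : nat) (C : cmd) : cmd :=
  match C with
  | Cmd b M => Cmd (if b <? k then b else if b =? k then a else pred b)
                   (ren_t k a M)
  end.

Inductive red_t : term -> term -> Prop :=
| r_beta : forall M N, red_t (App (Lam M) N) (subst_t 0 N M)
| r_mu : forall C N, red_t (App (Mu C) N) (Mu (ssubst_c 0 (liftn_t 0 N) C))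
| r_lam : forall M M', red_t M M' -> red_t (Lam M) (Lam M')
| r_appl : forall M M' N, red_t M M' -> red_t (App M N) (App M' N)
| r_appr : forall M N N', red_t N N' -> red_t (App M N) (App M N')
| r_muc : forall C C', red_c C C' -> red_t (Mu C) (Mu C')
with red_c : cmd -> cmd -> Prop :=
| r_ren : forall a C, red_c (Cmd a (Mu C)) (ren_c 0 a C)
| r_cmd : forall a M M', red_t M M' -> red_c (Cmd a M) (Cmd a M').

(* bases: total maps, omega outside the (finite) domain *)
Definition basis (L : complete_lattice) := nat -> dtype L.
Definition context (L : complete_lattice) := nat -> ctype L.

Definition scons {A : Type} (x : A) (f : nat -> A) : nat -> A :=
  fun n => match n with 0 => x | S n => f n end.

Definition finite_basis {L : complete_lattice} (G : basis L) : Prop :=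
  exists m, forall n, m <= n -> G n = OmD.
Definition finite_context {L : complete_lattice} (D : context L) : Prop :=
  exists m, forall n, m <= n -> D n = OmC.

Inductive typ_t (L : complete_lattice)
  : basis L -> term -> dtype L -> context L -> Prop :=
| t_ax : forall G D x, typ_t L G (Var x) (G x) D
| t_abs : forall G D d k r M,
    typ_t L (scons d G) M (DArr k r) D ->
    typ_t L G (Lam M) (DArr (Prod d k) r) D
| t_app : forall G D d k r M N,
    typ_t L G M (DArr (Prod d k) r) D ->
    typ_t L G N d D ->
    typ_t L G (App M N) (DArr k r) D
| t_mu : forall G D k k' r C,
    typ_c L G C (Prod (DArr k' r) k') (scons k D) ->
    typ_t L G (Mu C) (DArr k r) D
| t_and : forall G D M d e,
    typ_t L G M d D -> typ_t L G M e D -> typ_t L G M (AndD d e) D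
| t_om : forall G D M, typ_t L G M OmD D
| t_le : forall G D M d e, typ_t L G M d D -> leD L d e -> typ_t L G M e D
with typ_c (L : complete_lattice)
  : basis L -> cmd -> ctype L -> context L -> Prop :=
| t_cmd : forall G D a M d,
    typ_t L G M d D -> typ_c L G (Cmd a M) (Prod d (D a)) D
| tc_and : forall G D C k l,
    typ_c L G C k D -> typ_c L G C l D -> typ_c L G C (AndC k l) D
| tc_om : forall G D C, typ_c L G C OmC D
| tc_le : forall G D C k l, typ_c L G C k D -> leC L k l -> typ_c L G C l D.

(* Subject reduction follows, as usual, from generation lemmas for abstractions
   and mu-abstractions and from substitution lemmas for the three substitutions
   performed by the redexes.  The difficulty is inverting subtyping.  Against an
   arrow [k -> rho] it is done by a syntax-directed characterisation of the types
   below it, which is antitone along [<=D]; against a product [d x k] by the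
   monotone projections of [Lambda_C] onto its two factors.  In a structural
   substitution [_[alpha <= N]] every command [[alpha]M] becomes [[alpha](M N)],
   so a name of type [d x k] with [N : d] acquires type [k]; commands are
   therefore typed through the judgement [M : Delta(alpha) -> rho] that the
   mu-rule consumes, rather than through the general command typing. *)

From Stdlib Require Import Arith Lia.

Scheme typ_t_mut := Induction for typ_t Sort Prop
  with typ_c_mut := Induction for typ_c Sort Prop.
Scheme term_mut := Induction for term Sort Prop
  with cmd_mut := Induction for cmd Sort Prop.
Combined Scheme term_cmd_mut from term_mut, cmd_mut.
Scheme red_t_mut := Induction for red_t Sort Prop
  with red_c_mut := Induction for red_c Sort Prop.

Definition shift (c n : nat) : nat := if n <? c then n else S n.

Lemma shift_lt (c n : nat) : n < c -> shift c n = n.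
Proof. intros H; unfold shift; rewrite (proj2 (Nat.ltb_lt _ _) H); reflexivity. Qed.

Lemma shift_ge (c n : nat) : c <= n -> shift c n = S n.
Proof. intros H; unfold shift; rewrite (proj2 (Nat.ltb_ge _ _) H); reflexivity. Qed.

Definition ren_index (k a n : nat) : nat :=
  if n <? k then n else if n =? k then a else pred n.

Lemma scons_shift {A : Type} (f g : nat -> A) (c : nat) (x : A) :
  (forall n, f (shift c n) = g n) ->
  forall n, scons x f (shift (S c) n) = scons x g n.
Proof.
  intros Hfg [|n]; [reflexivity|].
  unfold scons at 2; rewrite <- Hfg; unfold shift.
  change (S n <? S c) with (n <? c).
  destruct (n <? c); reflexivity.
Qed.

Lemma scons_ren_index {A : Type} (f g : nat -> A) (k a : nat) (x : A) :
  (forall n, f (ren_index k a n) = g n) ->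
  forall n, scons x f (ren_index (S k) (S a) n) = scons x g n.
Proof.
  intros Hfg [|n]; [reflexivity|].
  unfold scons at 2; rewrite <- Hfg; unfold ren_index.
  change (S n <? S k) with (n <? k); change (S n =? S k) with (n =? k).
  destruct (Nat.ltb_spec n k), (Nat.eqb_spec n k); try reflexivity.
  destruct n; [lia | reflexivity].
Qed.

Section IntersectionTypes.

Variable L : complete_lattice.

Local Notation "r <=R s" := (leR L r s) (at level 70).
Local Notation "d <=D e" := (leD L d e) (at level 70).
Local Notation "k <=C l" := (leC L k l) (at level 70).

Lemma leR_and_mono (r1 r2 s1 s2 : rtype L) :
  r1 <=R s1 -> r2 <=R s2 -> AndR r1 r2 <=R AndR s1 s2.
Proof.
  intros H1 H2.
  apply leR_glb; eapply leR_trans; [apply leR_andl | | apply leR_andr | ]; assumption.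
Qed.

Lemma leR_above_om (r s : rtype L) : OmR <=R r -> s <=R r.
Proof. intros H; eapply leR_trans; [apply leR_om | exact H]. Qed.

(* A syntax-directed description of [d <=D DArr k rho], read off the components
   [k0 -> r] of [d] with [k <=C k0] and [psi_a ~ omega -> psi_a]; by
   [below_arrow_leD] it inverts subtyping against arrow types. *)
Fixpoint below_arrow (d : dtype L) (k : ctype L) (rho : rtype L) : Prop :=
  match d with
  | DPsi a => Psi a <=R rho
  | DArr k0 r => (k <=C k0 /\ r <=R rho) \/ OmR <=R rho
  | OmD => OmR <=R rho
  | AndD d1 d2 => exists r1 r2,
      below_arrow d1 k r1 /\ below_arrow d2 k r2 /\ AndR r1 r2 <=R rho
  end.

Lemma below_arrow_le (d : dtype L) k r r' :
  below_arrow d k r -> r <=R r' -> below_arrow d k r'.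
Proof.
  destruct d as [a|k0 r0| |d1 d2]; simpl; intros H Hr.
  - eapply leR_trans; eauto.
  - destruct H as [[Hk H]|H]; [left; split|right]; eauto using leR_trans.
  - eapply leR_trans; eauto.
  - destruct H as (r1 & r2 & H1 & H2 & H); exists r1, r2; eauto using leR_trans.
Qed.

Lemma below_arrow_om (d : dtype L) k : below_arrow d k OmR.
Proof.
  induction d as [a|k0 r0| |d1 IH1 d2 IH2]; simpl.
  - apply leR_om.
  - right; apply leR_refl.
  - apply leR_refl.
  - exists OmR, OmR; repeat split; auto using leR_om.
Qed.

Lemma below_arrow_meet (d : dtype L) k r1 r2 :
  below_arrow d k r1 -> below_arrow d k r2 -> below_arrow d k (AndR r1 r2).
Proof.
  revert r1 r2; induction d as [a|k0 r0| |d1 IH1 d2 IH2]; simpl; intros r1 r2 H1 H2.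
  - apply leR_glb; assumption.
  - destruct H1 as [[Hk H1]|H1], H2 as [[Hk2 H2]|H2];
      [left; split| left; split| left; split| right];
      auto using leR_glb, leR_above_om.
  - apply leR_glb; assumption.
  - destruct H1 as (s1 & s2 & Hs1 & Hs2 & H1), H2 as (t1 & t2 & Ht1 & Ht2 & H2).
    exists (AndR s1 t1), (AndR s2 t2); repeat split; auto.
    apply leR_glb; eapply leR_trans; try eassumption;
      apply leR_and_mono; auto using leR_andl, leR_andr.
Qed.

Lemma below_arrow_embR (s : rtype L) k r : below_arrow (embR s) k r <-> s <=R r.
Proof.
  revert r; induction s as [a| |s1 IH1 s2 IH2]; simpl; intros r; try reflexivity.
  split.
  - intros (r1 & r2 & H1 & H2 & H).
    eapply leR_trans; [apply leR_and_mono; [apply IH1 | apply IH2] | ]; eassumption.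
  - intros H; exists s1, s2; repeat split; auto; [apply IH1 | apply IH2]; apply leR_refl.
Qed.

Lemma below_arrow_leD (d e : dtype L) :
  d <=D e -> forall k r, below_arrow e k r -> below_arrow d k r.
Proof.
  induction 1 as [d|d e f _ IH1 _ IH2|d e|d e|d|d e f _ IH1 _ IH2|r s Hrs| |a|a
                  |k r1 r2|k k' r r' Hk Hr];
    intros c rho H; simpl in *.
  - exact H.
  - auto.
  - exists rho, OmR; auto using below_arrow_om, leR_andl.
  - exists OmR, rho; auto using below_arrow_om, leR_andr.
  - eapply below_arrow_le; [apply below_arrow_om | exact H].
  - destruct H as (r1 & r2 & H1 & H2 & H).
    eapply below_arrow_le; [apply below_arrow_meet; [apply IH1 | apply IH2] | ]; eassumption.
  - apply below_arrow_embR; apply below_arrow_embR in H; eauto using leR_trans.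
  - destruct H as [[_ H]|H]; exact H.
  - destruct H as [[_ H]|H]; eauto using leR_above_om.
  - left; split; [apply leC_om | exact H].
  - destruct H as [[Hk H]|H].
    + exists r1, r2; repeat split; try (left; split); auto using leR_refl.
    + exists OmR, OmR; repeat split; try right; auto using leR_refl, leR_above_om.
  - destruct H as [[Hk' H]|H]; [left; split|right]; eauto using leC_trans, leR_trans.
Qed.

Lemma below_arrow_self (k : ctype L) r : below_arrow (DArr k r) k r.
Proof. left; split; [apply leC_refl | apply leR_refl]. Qed.

Fixpoint prod_fst (l : ctype L) : dtype L :=
  match l with
  | Prod d _ => d
  | OmC => OmD
  | AndC l1 l2 => AndD (prod_fst l1) (prod_fst l2)
  end.

Fixpoint prod_snd (l : ctype L) : ctype L :=
  match l with
  | Prod _ k => k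
  | OmC => OmC
  | AndC l1 l2 => AndC (prod_snd l1) (prod_snd l2)
  end.

Lemma leC_proj (l m : ctype L) :
  l <=C m -> prod_fst l <=D prod_fst m /\ prod_snd l <=C prod_snd m.
Proof.
  induction 1; simpl; intuition (eauto using leD, leC).
Qed.

Lemma leC_prod_inv (a d : dtype L) (b k : ctype L) :
  Prod a b <=C Prod d k -> a <=D d /\ b <=C k.
Proof. exact (leC_proj (Prod a b) (Prod d k)). Qed.

Lemma typ_t_lift (G : basis L) M e D :
  typ_t L G M e D -> forall c G', (forall n, G' (shift c n) = G n) ->
  typ_t L G' (lift_t c M) e D.
Proof.
  intros H.
  apply (typ_t_mut L
    (fun G M e D _ => forall c G', (forall n, G' (shift c n) = G n) ->
       typ_t L G' (lift_t c M) e D)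
    (fun G C l D _ => forall c G', (forall n, G' (shift c n) = G n) ->
       typ_c L G' (lift_c c C) l D));
    intros; simpl; eauto using typ_t, typ_c, scons_shift.
  rewrite <- H0; unfold shift; destruct (x <? c); constructor.
Qed.

Lemma typ_t_liftn (G : basis L) M e D :
  typ_t L G M e D -> forall c D', (forall n, D' (shift c n) = D n) ->
  typ_t L G (liftn_t c M) e D'.
Proof.
  intros H.
  apply (typ_t_mut L
    (fun G M e D _ => forall c D', (forall n, D' (shift c n) = D n) ->
       typ_t L G (liftn_t c M) e D')
    (fun G C l D _ => forall c D', (forall n, D' (shift c n) = D n) ->
       typ_c L G (liftn_c c C) l D'));
    intros; simpl; eauto using typ_t, typ_c, scons_shift.
  rewrite <- (H1 a); constructor; auto.
Qed.

Lemma typ_t_ren (G : basis L) M e D :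
  typ_t L G M e D -> forall k a D', (forall n, D' (ren_index k a n) = D n) ->
  typ_t L G (ren_t k a M) e D'.
Proof.
  intros H.
  apply (typ_t_mut L
    (fun G M e D _ => forall k a D', (forall n, D' (ren_index k a n) = D n) ->
       typ_t L G (ren_t k a M) e D')
    (fun G C l D _ => forall k a D', (forall n, D' (ren_index k a n) = D n) ->
       typ_c L G (ren_c k a C) l D'));
    intros; simpl; eauto using typ_t, typ_c, scons_ren_index.
  rewrite <- (H1 a); constructor; auto.
Qed.

Lemma typ_t_subst (G : basis L) M e D :
  typ_t L G M e D -> forall k G' N,
  (forall n, G (shift k n) = G' n) -> typ_t L G' N (G k) D ->
  typ_t L G' (subst_t k N M) e D.
Proof.
  intros H.
  apply (typ_t_mut L
    (fun G M e D _ => forall k G' N,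
       (forall n, G (shift k n) = G' n) -> typ_t L G' N (G k) D ->
       typ_t L G' (subst_t k N M) e D)
    (fun G C l D _ => forall k G' N,
       (forall n, G (shift k n) = G' n) -> typ_t L G' N (G k) D ->
       typ_c L G' (subst_c k N C) l D));
    intros; simpl; eauto using typ_t, typ_c.
  - rename x into n, H0 into HG, H1 into HN.
    destruct (Nat.ltb_spec n k) as [Hlt|Hge];
      [|destruct (Nat.eqb_spec n k) as [->|Hne]; [exact HN|]].
    + rewrite <- (shift_lt k n Hlt) at 2; rewrite HG; constructor.
    + rewrite <- (Nat.succ_pred_pos n) at 2 by lia.
      rewrite <- (shift_ge k (pred n)), HG by lia; constructor.
  - constructor; apply H0; [apply scons_shift; assumption |].
    eapply typ_t_lift; eauto; reflexivity.
  - econstructor; apply H0; [assumption |].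
    eapply typ_t_liftn; eauto; reflexivity.
Qed.

Lemma typ_t_basis_le (G G' : basis L) M e D :
  typ_t L G M e D -> (forall n, G' n <=D G n) -> typ_t L G' M e D.
Proof.
  intros H; revert G'.
  apply (typ_t_mut L
    (fun G M e D _ => forall G', (forall n, G' n <=D G n) -> typ_t L G' M e D)
    (fun G C l D _ => forall G', (forall n, G' n <=D G n) -> typ_c L G' C l D));
    intros; eauto using typ_t, typ_c.
  constructor; apply H0; intros [|n]; simpl; auto using leD_refl.
Qed.

Lemma typ_t_ctx_le (G : basis L) M e (D D' : context L) :
  typ_t L G M e D -> (forall n, D' n <=C D n) -> typ_t L G M e D'.
Proof.
  intros H; revert D'.
  apply (typ_t_mut L
    (fun G M e D _ => forall D', (forall n, D' n <=C D n) -> typ_t L G M e D')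
    (fun G C l D _ => forall D', (forall n, D' n <=C D n) -> typ_c L G C l D'));
    intros; eauto using typ_t, typ_c.
  - econstructor; apply H0; intros [|n]; simpl; auto using leC_refl.
  - eapply tc_le; [constructor; eauto |]. apply leC_prod; auto using leD_refl.
Qed.

Lemma typ_var_ctx (G : basis L) n e (D D' : context L) :
  typ_t L G (Var n) e D -> typ_t L G (Var n) e D'.
Proof.
  remember (Var n) as t eqn:Et; induction 1; try discriminate; eauto using typ_t.
Qed.

Lemma typ_arr_sub (G : basis L) M k k' r r' D :
  typ_t L G M (DArr k r) D -> k' <=C k -> r <=R r' -> typ_t L G M (DArr k' r') D.
Proof. intros H Hk Hr; eapply t_le; [exact H | apply leD_arr; assumption]. Qed.

Lemma typ_arr_om (G : basis L) M k r D : OmR <=R r -> typ_t L G M (DArr k r) D.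
Proof.
  intros H; eapply t_le; [apply t_om |].
  eapply leD_trans; [apply leD_omarr | apply leD_arr; [apply leC_om | exact H]].
Qed.

Lemma typ_arr_and (G : basis L) M k r1 r2 D :
  typ_t L G M (DArr k r1) D -> typ_t L G M (DArr k r2) D ->
  typ_t L G M (DArr k (AndR r1 r2)) D.
Proof. intros H1 H2; eapply t_le; [exact (t_and L G D M _ _ H1 H2) | apply leD_arrand]. Qed.

Lemma typ_lam_inv (G : basis L) M e D :
  typ_t L G (Lam M) e D ->
  forall d k r, below_arrow e (Prod d k) r -> typ_t L (scons d G) M (DArr k r) D.
Proof.
  remember (Lam M) as t eqn:Et; induction 1; try discriminate; intros d0 k0 r0 Hb;
    simpl in Hb.
  - injection Et as ->.
    destruct Hb as [[Hk Hr]|Hom]; [|apply typ_arr_om; exact Hom].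
    apply leC_prod_inv in Hk as [Hd Hk].
    eapply typ_arr_sub; [|exact Hk | exact Hr].
    eapply typ_t_basis_le; [eassumption |].
    intros [|n]; simpl; auto using leD_refl.
  - destruct Hb as (r1 & r2 & H1 & H2 & Hr).
    eapply typ_arr_sub with (r := AndR r1 r2);
      [apply typ_arr_and; eauto | apply leC_refl | exact Hr].
  - apply typ_arr_om; exact Hb.
  - eauto using below_arrow_leD.
Qed.

Definition cmd_result (G : basis L) (C : cmd) (D : context L) (r : rtype L) : Prop :=
  match C with Cmd b M => typ_t L G M (DArr (D b) r) D end.

Lemma typ_cmd_inv (G : basis L) b M l D :
  typ_c L G (Cmd b M) l D -> exists d, typ_t L G M d D /\ Prod d (D b) <=C l.
Proof.
  remember (Cmd b M) as C eqn:EC; induction 1; subst.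
  - injection EC as -> ->; exists d; split; [assumption | apply leC_refl].
  - destruct IHtyp_c1 as (d1 & H1 & Hl1); destruct IHtyp_c2 as (d2 & H2 & Hl2); auto.
    exists (AndD d1 d2); split; [apply t_and; assumption |].
    apply leC_glb; eapply leC_trans; try eassumption;
      apply leC_prod; auto using leD_andl, leD_andr, leC_refl.
  - exists OmD; split; [apply t_om | apply leC_om].
  - destruct IHtyp_c as (d & Hd & Hl); auto.
    exists d; split; [assumption | eapply leC_trans; eassumption].
Qed.

Lemma cmd_result_of_typ (G : basis L) C k r D :
  typ_c L G C (Prod (DArr k r) k) D -> cmd_result G C D r.
Proof.
  destruct C as [b M]; intros H.
  apply typ_cmd_inv in H as (d & Hd & Hl); apply leC_prod_inv in Hl as [Hd' Hk].
  eapply typ_arr_sub; [eapply t_le; eassumption | exact Hk | apply leR_refl].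
Qed.

Lemma typ_mu_intro (G : basis L) C k r D :
  cmd_result G C (scons k D) r -> typ_t L G (Mu C) (DArr k r) D.
Proof. destruct C as [b M]; intros H; eapply t_mu, t_cmd, H. Qed.

Lemma cmd_result_weaken (G : basis L) C (D D' : context L) r r' :
  cmd_result G C D r -> (forall n, D' n <=C D n) -> r <=R r' -> cmd_result G C D' r'.
Proof.
  destruct C as [b M]; simpl; intros H HD Hr.
  eapply typ_arr_sub; [eapply typ_t_ctx_le; eassumption | apply HD | exact Hr].
Qed.

Lemma cmd_result_ren (G : basis L) C (D D' : context L) k a r :
  cmd_result G C D r -> (forall n, D' (ren_index k a n) = D n) ->
  cmd_result G (ren_c k a C) D' r.
Proof.
  destruct C as [b M]; simpl; intros H HD.
  rewrite <- HD in H; eapply typ_t_ren; eassumption.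
Qed.

Lemma typ_mu_inv (G : basis L) C e D :
  typ_t L G (Mu C) e D -> forall c r, below_arrow e c r -> cmd_result G C (scons c D) r.
Proof.
  remember (Mu C) as t eqn:Et; induction 1; try discriminate; intros c0 r0 Hb;
    simpl in Hb.
  - injection Et as ->.
    destruct Hb as [[Hk Hr]|Hom].
    + eapply cmd_result_weaken; [eapply cmd_result_of_typ; eassumption | | exact Hr].
      intros [|n]; simpl; auto using leC_refl.
    + destruct C; apply typ_arr_om; exact Hom.
  - destruct Hb as (r1 & r2 & H1 & H2 & Hr); subst; destruct C.
    eapply typ_arr_sub with (r := AndR r1 r2);
      [apply typ_arr_and; [apply IHtyp_t1 | apply IHtyp_t2]; auto | apply leC_refl | exact Hr].
  - subst; destruct C; apply typ_arr_om; exact Hb.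
  - eauto using below_arrow_leD.
Qed.

Definition ctx_pop (D0 : context L) (k : nat) (d : dtype L) (D1 : context L) : Prop :=
  D0 k = Prod d (D1 k) /\ forall n, n <> k -> D1 n = D0 n.

Lemma ctx_pop_scons (D0 D1 : context L) k d c :
  ctx_pop D0 k d D1 -> ctx_pop (scons c D0) (S k) d (scons c D1).
Proof.
  intros [Hk Hn]; split; [exact Hk |].
  intros [|n] Hnk; simpl; [reflexivity | apply Hn; congruence].
Qed.

Lemma typ_ssubst :
  (forall M G D0 D1 k N d e, ctx_pop D0 k d D1 -> typ_t L G N d D1 ->
     typ_t L G M e D0 -> typ_t L G (ssubst_t k N M) e D1) /\
  (forall C G D0 D1 k N d r, ctx_pop D0 k d D1 -> typ_t L G N d D1 ->
     cmd_result G C D0 r -> cmd_result G (ssubst_c k N C) D1 r).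
Proof.
  apply term_cmd_mut.
  - intros n G D0 D1 k N d e _ _ H; eapply typ_var_ctx; exact H.
  - intros M IH G D0 D1 k N d e Hpop HN H; simpl.
    remember (Lam M) as t eqn:Et; induction H; try discriminate; eauto using typ_t.
    injection Et as ->; constructor.
    eapply IH; [exact Hpop | eapply typ_t_lift; [exact HN | reflexivity] | assumption].
  - intros M1 IH1 M2 IH2 G D0 D1 k N d e Hpop HN H; simpl.
    remember (App M1 M2) as t eqn:Et; induction H; try discriminate; eauto using typ_t.
    injection Et as -> ->; econstructor; eauto.
  - intros C IH G D0 D1 k N d e Hpop HN H; simpl.
    remember (Mu C) as t eqn:Et; induction H; try discriminate; eauto using typ_t.
    injection Et as ->; apply typ_mu_intro.
    eapply IH; [apply ctx_pop_scons, Hpop | eapply typ_t_liftn; [exact HN | reflexivity] |].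
    eapply cmd_result_of_typ; eassumption.
  - intros b M IH G D0 D1 k N d r Hpop HN H; simpl in *.
    pose proof Hpop as [Hk Hn].
    destruct (Nat.eqb_spec b k) as [->|Hbk]; simpl.
    + rewrite Hk in H; econstructor; [eapply IH | exact HN]; eauto.
    + rewrite Hn by assumption; eapply IH; eauto.
Qed.

Lemma subject_reduction M N :
  red_t M N -> forall (G : basis L) D e, typ_t L G M e D -> typ_t L G N e D.
Proof.
  revert M N.
  apply (red_t_mut
    (fun M N _ => forall (G : basis L) D e, typ_t L G M e D -> typ_t L G N e D)
    (fun C C' _ => forall (G : basis L) D r, cmd_result G C D r -> cmd_result G C' D r)).
  - intros M N G D e H.
    remember (App (Lam M) N) as t eqn:Et; induction H; try discriminate; eauto using typ_t.
    injection Et as -> ->.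
    eapply typ_t_subst;
      [eapply typ_lam_inv; [eassumption | apply below_arrow_self] | reflexivity | assumption].
  - intros C N G D e H.
    remember (App (Mu C) N) as t eqn:Et; induction H; try discriminate; eauto using typ_t.
    injection Et as -> ->; apply typ_mu_intro.
    apply (proj2 typ_ssubst C G (scons (Prod d k) D) (scons k D) 0 _ d r).
    + split; [reflexivity | intros [|n] Hn; [congruence | reflexivity]].
    + eapply typ_t_liftn; [eassumption | reflexivity].
    + eapply typ_mu_inv; [eassumption | apply below_arrow_self].
  - intros M M' _ IH G D e H.
    remember (Lam M) as t eqn:Et; induction H; try discriminate; eauto using typ_t.
    injection Et as ->; constructor; auto.
  - intros M M' N _ IH G D e H.
    remember (App M N) as t eqn:Et; induction H; try discriminate; eauto using typ_t.
    injection Et as -> ->; econstructor; eauto.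
  - intros M N N' _ IH G D e H.
    remember (App M N) as t eqn:Et; induction H; try discriminate; eauto using typ_t.
    injection Et as -> ->; econstructor; eauto.
  - intros C C' _ IH G D e H.
    remember (Mu C) as t eqn:Et; induction H; try discriminate; eauto using typ_t.
    injection Et as ->; apply typ_mu_intro, IH.
    eapply cmd_result_of_typ; eassumption.
  - intros a C G D r H.
    eapply cmd_result_ren; [eapply typ_mu_inv; [exact H | apply below_arrow_self] |].
    intros [|n]; reflexivity.
  - intros a M M' _ IH G D r H; exact (IH G D _ H).
Qed.

End IntersectionTypes.

Theorem theorem5p4 :
  forall (L : complete_lattice), omega_algebraic L ->
  forall (G : basis L) (D : context L) (M N : term) (d : dtype L),
    finite_basis G -> finite_context D ->
    red_t M N -> typ_t L G M d D -> typ_t L G N d D.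
Proof.
  intros L _ G D M N d _ _ Hred Htyp.
  exact (subject_reduction L M N Hred G D d Htyp).
Qed.
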